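(* Let $\lambda=\Theta\Rightarrow\Omega$ and $\lambda^*$ be as in the context. For every model $\mathcal{M}=\langle W,V\rangle$, $w\in W$ and $X\subseteq W$: $\mathcal{M},w,X\vDash\lambda$ if and only if $\mathcal{M},w,X\vDash\lambda^*$, where $\vDash$ is the Kolodny–MacFarlane semantics.
   Context: Formulas: $\varphi::= p\mid \neg\varphi\mid (\varphi\wedge\varphi)\mid \Box\varphi \mid (\varphi\Rightarrow\varphi)$; $\vee,\to,\bot$ as usual, $\Diamond\varphi:=\neg\Box\neg\varphi$; nonmodal formulas contain neither $\Box$ nor $\Rightarrow$. Models $\mathcal{M}=\langle W,V\rangle$: $W$ nonempty, $V(p)\subseteq W$. Kolodny–MacFarlane semantics at $\mathcal{M},w,X$ ($w\in W$, $X\subseteq W$): $p$ true iff $w\in V(p)$; $\neg,\wedge$ Boolean; $\Box\varphi$ true iff $\varphi$ is true at $\mathcal{M},v,X$ for all $v\in X$; $\varphi\Rightarrow\psi$ true iff $\mathcal{M},w,X'\vDash\Box\psi$ for every $X'$ with (i) $X'\subseteq X$, (ii) $X'\subseteq\llbracket\varphi\rrbracket^{\mathcal{M},X'}$, (iii) no $X''$ satisfying (i),(ii) has $X'\subsetneq X''$; here $\llbracket\varphi\rrbracket^{\mathcal{M},Y}=\{v\in Y\mid \mathcal{M},v,Y\vDash\varphi\}$. Let $\lambda=\Theta\Rightarrow\Omega$ with $\Theta=\bigvee_{i\in I}\theta_i$, $\Omega=\bigvee_{j\in J}\omega_j$ ($I,J$ finite), $\theta_i=\varphi_i\wedge\Box\psi_i\wedge\bigwedge_{n\in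 D_i}\Diamond\chi_n$, $\omega_j=\alpha_j\wedge\Box\beta_j\wedge\bigwedge_{m\in E_j}\Diamond\gamma_m$, all $\varphi_i,\psi_i,\chi_n,\alpha_j,\beta_j,\gamma_m$ nonmodal. For $K\subseteq I$: $\mathtt{info}_K:=(\bigvee_{k\in K}\varphi_k)\wedge\bigwedge_{k\in K}\psi_k$; $\mathtt{good}_K:=\bigwedge_{k\in K}\bigwedge_{n\in D_k}\Diamond(\mathtt{info}_K\wedge\chi_n)$; $\mathtt{max}_K:=\mathtt{good}_K\wedge\bigwedge_{L\subseteq I}\big((\Box(\mathtt{info}_K\to\mathtt{info}_L)\wedge\Diamond(\neg\mathtt{info}_K\wedge\mathtt{info}_L))\to\neg\mathtt{good}_L\big)$. For $S\subseteq J$: $\mathtt{state}_S:=\bigwedge_{s\in S}\alpha_s\wedge\bigwedge_{s\in J\setminus S}\neg\alpha_s$. Then $\lambda^*:=\bigwedge_{K\subseteq I}\Big(\mathtt{max}_K\to\Box\big(\mathtt{info}_K\to\bigwedge_{S\subseteq J}(\mathtt{state}_S\to\bigvee_{s\in S}(\Box(\mathtt{info}_K\to\beta_s)\wedge\bigwedge_{m\in E_s}\Diamond(\mathtt{info}_K\wedge\gamma_m)))\big)\Big)$, with empty disjunction $\bot$ and empty conjunction $\top$. *)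

From mathcomp Require Import all_boot.
Set Implicit Arguments. Unset Strict Implicit. Unset Printing Implicit Defensive.

(* Formulas: phi ::= p | ~phi | (phi /\ phi) | Box phi | (phi => phi) *)
Inductive form : Type :=
| Var  : nat -> form
| Neg  : form -> form
| And  : form -> form -> form
| Box  : form -> form
| Cond : form -> form -> form.

Definition Or  (a b : form) : form := Neg (And (Neg a) (Neg b)).
Definition Imp (a b : form) : form := Neg (And a (Neg b)).
Definition Bot : form := And (Var 0) (Neg (Var 0)).
Definition Top : form := Neg Bot.
Definition Dia (a : form) : form := Neg (Box (Neg a)).

Definition BigAnd (s : seq form) : form := foldr And Top s.
Definition BigOr  (s : seq form) : form := foldr Or Bot s.

Fixpoint nonmodal (f : form) : Prop :=
  match f with
  | Var _ => True
  | Neg a => nonmodal a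
  | And a b => nonmodal a /\ nonmodal b
  | Box _ => False
  | Cond _ _ => False
  end.

(* Kolodny–MacFarlane semantics on a model <W,V>, at world w and
   information state X (subsets of W represented as predicates). *)
Fixpoint sat (W : Type) (V : nat -> W -> Prop) (w : W) (X : W -> Prop)
  (f : form) {struct f} : Prop :=
  match f with
  | Var p => V p w
  | Neg a => ~ sat V w X a
  | And a b => sat V w X a /\ sat V w X b
  | Box a => forall v, X v -> sat V v X a
  | Cond a b =>
      forall X' : W -> Prop,
        (forall v, X' v -> X v) ->
        (forall v, X' v -> sat V v X' a) ->
        (~ exists X'' : W -> Prop,
              (forall v, X'' v -> X v) /\
              (forall v, X'' v -> sat V v X'' a) /\
              (forall v, X' v -> X'' v) /\
              (exists v, X'' v /\ ~ X' v)) ->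
        forall v, X' v -> sat V v X' b
  end.

Section Lambda.
Variables (I J : finType).
Variables (phi psi : I -> form) (D : I -> seq form).
Variables (alpha beta : J -> form) (E : J -> seq form).

Definition theta (i : I) : form :=
  And (And (phi i) (Box (psi i))) (BigAnd [seq Dia c | c <- D i]).
Definition omega (j : J) : form :=
  And (And (alpha j) (Box (beta j))) (BigAnd [seq Dia g | g <- E j]).

Definition Theta : form := BigOr [seq theta i | i <- enum I].
Definition Omega : form := BigOr [seq omega j | j <- enum J].
Definition lambda : form := Cond Theta Omega.

Definition info (K : {set I}) : form :=
  And (BigOr [seq phi k | k <- enum K]) (BigAnd [seq psi k | k <- enum K]).

Definition good (K : {set I}) : form :=
  BigAnd (flatten [seq [seq Dia (And (info K) c) | c <- D k] | k <- enum K]).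

Definition maxK (K : {set I}) : form :=
  And (good K)
      (BigAnd [seq Imp (And (Box (Imp (info K) (info L)))
                            (Dia (And (Neg (info K)) (info L))))
                       (Neg (good L)) | L <- enum {set I}]).

Definition state (Sj : {set J}) : form :=
  And (BigAnd [seq alpha s | s <- enum Sj])
      (BigAnd [seq Neg (alpha s) | s <- enum (~: Sj)]).

Definition lambda_star : form :=
  BigAnd [seq Imp (maxK K)
              (Box (Imp (info K)
                 (BigAnd [seq Imp (state Sj)
                    (BigOr [seq And (Box (Imp (info K) (beta s)))
                                    (BigAnd [seq Dia (And (info K) g) | g <- E s])
                           | s <- enum Sj])
                  | Sj <- enum {set J}])))
         | K <- enum {set I}].
End Lambda.

(* If a substate Y of X supports Theta then, writing K for the set of disjuncts
   theta_i whose modal part [Box psi_i /\ Dia chi_n ...] holds on Y, Y lies inside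
   X /\ [[info_K]] and K is good; conversely X /\ [[info_K]] supports Theta for every
   good K.  Hence the maximal Theta-substates of X, the only states the conditional
   inspects, are exactly the sets X /\ [[info_K]] with max_K true, and lambda* states
   that Omega holds throughout each of them, the conjunct for state_S being the one
   whose S is the set of alpha_s true at the world considered. *)

From Stdlib Require Import List.
From mathcomp Require Import all_boot boolp.

Set Implicit Arguments.
Unset Strict Implicit.
Unset Printing Implicit Defensive.

Lemma InP (T : eqType) (x : T) (s : seq T) : reflect (In x s) (x \in s).
Proof.
elim: s => [|y s IH] /=; first by constructor.
by rewrite in_cons; apply: (iffP orP) => [[/eqP ->|/IH]|[->|/IH]]; auto.
Qed.

Lemma In_enum (T : finType) (A : {set T}) x : In x (enum A) <-> x \in A.
Proof. by rewrite (rwP (InP _ _)) mem_enum. Qed.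

Lemma In_enumT (T : finType) (x : T) : In x (enum T).
Proof. by apply/InP; rewrite mem_enum. Qed.

Lemma exists_in_truth_set (T : finType) (A Q : T -> Prop) :
  (forall S : {set T}, (forall t, t \in S -> A t) -> (forall t, t \in ~: S -> ~ A t) ->
     exists2 t, t \in S & Q t) <->
  exists2 t, A t & Q t.
Proof.
split=> [H | [t At Qt] S SA SnA].
- have [t|t|t] := H [set t | `[< A t >]].
  + by rewrite inE => /asboolP.
  + by rewrite !inE => /asboolPn.
  + by rewrite inE => /asboolP At Qt; exists t.
- exists t => //; apply: contrapT => tS; apply: (SnA t) => //.
  by rewrite in_setC; apply/negP.
Qed.

Section Semantics.
Variables (W : Type) (V : nat -> W -> Prop).
Implicit Types (v : W) (X Y : W -> Prop) (a b f : form).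

Lemma sat_Or v Y a b : sat V v Y (Or a b) <-> sat V v Y a \/ sat V v Y b.
Proof.
by rewrite /=; have [] := pselect (sat V v Y a); have [] := pselect (sat V v Y b); tauto.
Qed.

Lemma sat_Imp v Y a b : sat V v Y (Imp a b) <-> (sat V v Y a -> sat V v Y b).
Proof. by rewrite /=; have [] := pselect (sat V v Y b); tauto. Qed.

Lemma sat_Dia v Y a : sat V v Y (Dia a) <-> exists2 u, Y u & sat V u Y a.
Proof.
split=> [nbox | [u Yu au] box]; last exact: box u Yu au.
by apply: contrapT => nex; apply: nbox => u Yu au; apply: nex; exists u.
Qed.

Lemma sat_Box_Imp v Y a b :
  sat V v Y (Box (Imp a b)) <-> forall u, Y u -> sat V u Y a -> sat V u Y b.
Proof. by split=> H u Yu; [apply/sat_Imp/H | apply/sat_Imp/H]. Qed.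

Lemma sat_BigAnd_map (T : Type) (F : T -> form) s v Y :
  sat V v Y (BigAnd [seq F x | x <- s]) <-> forall x, In x s -> sat V v Y (F x).
Proof.
elim: s => [|x s IH] /=; first by split=> // _; tauto.
rewrite IH; split=> [[Fx Fs] y [<-|/Fs]| H] //.
by split=> [|y ys]; apply: H; [left | right].
Qed.

Lemma sat_BigOr_map (T : Type) (F : T -> form) s v Y :
  sat V v Y (BigOr [seq F x | x <- s]) <-> exists2 x, In x s & sat V v Y (F x).
Proof.
elim: s => [|x s IH]; first by split=> [/= [] | []].
rewrite [BigOr _]/= sat_Or IH; split=> [[Fx|[y ys Fy]]|[y [<-|ys] Fy]].
- by exists x; first left.
- by exists y; first right.
- by left.
- by right; exists y.
Qed.

Lemma sat_BigAnd_cat s1 s2 v Y :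
  sat V v Y (BigAnd (s1 ++ s2)) <-> sat V v Y (BigAnd s1) /\ sat V v Y (BigAnd s2).
Proof. elim: s1 => [|f s1 IH] /=; [tauto | rewrite IH; tauto]. Qed.

Lemma sat_BigAnd_flatten (T : Type) (G : T -> seq form) s v Y :
  sat V v Y (BigAnd (flatten [seq G x | x <- s])) <->
  forall x, In x s -> sat V v Y (BigAnd (G x)).
Proof.
elim: s => [|x s IH] /=; first by split=> // _; tauto.
rewrite sat_BigAnd_cat IH; split=> [[Gx Gs] y [<-|/Gs]| H] //.
by split=> [|y ys]; apply: H; [left | right].
Qed.

Lemma sat_strict_entailment v Y a b :
  sat V v Y (And (Box (Imp a b)) (Dia (And (Neg a) b))) <->
  (forall u, Y u -> sat V u Y a -> sat V u Y b) /\
  exists2 u, Y u & ~ sat V u Y a /\ sat V u Y b.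
Proof.
rewrite /=; split=> -[ab nab]; split.
- by move=> u Yu au; apply: contrapT => nbu; exact: ab u Yu (conj au nbu).
- by apply: contrapT => nex; apply: nab => u Yu abu; apply: nex; exists u.
- by move=> u Yu [/(ab u Yu)].
- by case: nab => u Yu abu /(_ u Yu).
Qed.

Lemma sat_relative_box_dias v Y a b C :
  sat V v Y (And (Box (Imp a b)) (BigAnd [seq Dia (And a g) | g <- C])) <->
  (forall u, Y u -> sat V u Y a -> sat V u Y b) /\
  forall g, In g C -> exists2 u, Y u & sat V u Y a /\ sat V u Y g.
Proof.
rewrite [sat _ _ _ _]/= sat_BigAnd_map.
split=> -[ab aC]; split.
- by move=> u Yu au; apply: contrapT => nbu; exact: ab u Yu (conj au nbu).
- by move=> g /aC /sat_Dia[u Yu augu]; exists u.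
- by move=> u Yu [/(ab u Yu)].
- by move=> g /aC [u Yu augu]; apply/sat_Dia; exists u.
Qed.

Lemma sat_nonmodal f v Y Z : nonmodal f -> sat V v Y f <-> sat V v Z f.
Proof.
elim: f => [n|a IH|a IHa b IHb|a _|a _ b _] //= nf.
- by rewrite IH.
- by case: nf => na nb; rewrite IHa // IHb.
Qed.

Definition maximal_substate (P : (W -> Prop) -> Prop) X Y :=
  [/\ forall v, Y v -> X v, P Y &
      ~ exists Z, [/\ forall v, Z v -> X v, P Z, forall v, Y v -> Z v &
                      exists2 v, Z v & ~ Y v]].

Lemma sat_Cond (P : (W -> Prop) -> Prop) v X a b :
  (forall Z, P Z <-> forall u, Z u -> sat V u Z a) ->
  sat V v X (Cond a b) <-> forall Y, maximal_substate P X Y -> forall u, Y u -> sat V u Y b.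
Proof.
move=> PE /=; split=> [H Y [YX /PE Ya Ymax] | H Y YX Ya Ymax]; apply: H => //.
- move=> [Z [ZX [Za [YZ [u [Zu nYu]]]]]]; apply: Ymax.
  by exists Z; split=> //; [apply/PE | exists u].
- split=> //; first exact/PE.
  move=> [Z [ZX /PE Za YZ [u Zu nYu]]]; apply: Ymax.
  by exists Z; do !split=> //; exists u.
Qed.

End Semantics.

Section Normal_forms.
Variables (W : Type) (V : nat -> W -> Prop) (X : W -> Prop).
Implicit Types (u v : W) (Y Z : W -> Prop).

(* Nonmodal formulas are evaluated at the reference state [X]; by [sat_nonmodal] the
   choice of state is immaterial. *)
Definition box_dias_hold (b : form) (C : seq form) Y :=
  (forall u, Y u -> sat V u X b) /\ forall c, In c C -> exists2 u, Y u & sat V u X c.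

Definition nf_holds (T : Type) (a b : T -> form) (C : T -> seq form) Y v :=
  exists2 i, sat V v X (a i) & box_dias_hold (b i) (C i) Y.

Lemma nf_holds_ext (T : Type) (a b : T -> form) (C : T -> seq form) Y Z v :
  (forall u, Y u <-> Z u) -> nf_holds a b C Y v -> nf_holds a b C Z v.
Proof.
move=> YZ [i ai [Yb YC]]; exists i => //.
by split=> [u /YZ /Yb // | c /YC [u /YZ]]; exists u.
Qed.

Lemma sat_nf_disjunct a b C Y v : nonmodal a -> nonmodal b -> Forall nonmodal C ->
  sat V v Y (And (And a (Box b)) (BigAnd [seq Dia c | c <- C])) <->
  sat V v X a /\ box_dias_hold b C Y.
Proof.
move=> na nb /Forall_forall nC; rewrite /= sat_BigAnd_map (sat_nonmodal _ _ _ X na).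
split=> [[[av Yb] YC] | [av [Yb YC]]]; do !split=> //.
- by move=> u /Yb /(sat_nonmodal _ _ _ X nb).
- move=> c cC; have /sat_Dia[u Yu /(sat_nonmodal _ _ _ X (nC c cC)) cu] := YC c cC.
  by exists u.
- by move=> u /Yb /(sat_nonmodal _ _ Y _ nb).
- move=> c cC; have [u Yu /(sat_nonmodal _ _ Y _ (nC c cC)) cu] := YC c cC.
  by apply/sat_Dia; exists u.
Qed.

Lemma sat_nf (T : finType) (a b : T -> form) (C : T -> seq form) Y v :
  (forall i, nonmodal (a i)) -> (forall i, nonmodal (b i)) ->
  (forall i, Forall nonmodal (C i)) ->
  sat V v Y (BigOr [seq And (And (a i) (Box (b i))) (BigAnd [seq Dia c | c <- C i])
                   | i <- enum T]) <->
  nf_holds a b C Y v.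
Proof.
move=> na nb nC; rewrite sat_BigOr_map.
split=> [[i _] | [i ai bCi]].
- by move/(sat_nf_disjunct _ _ (na i) (nb i) (nC i)) => [ai bCi]; exists i.
- by exists i; [exact: In_enumT | apply/sat_nf_disjunct].
Qed.

End Normal_forms.

Section Maximal_theta_states.
Variables (W : Type) (V : nat -> W -> Prop) (X : W -> Prop).
Variables (I : finType) (phi psi : I -> form) (D : I -> seq form).
Implicit Types (u v : W) (Y Z : W -> Prop) (K L : {set I}).

Definition info_holds K v :=
  (exists2 k, k \in K & sat V v X (phi k)) /\ forall k, k \in K -> sat V v X (psi k).

Definition info_state K v := X v /\ info_holds K v.

Definition good_set K :=
  forall k, k \in K -> forall c, In c (D k) -> exists2 u, info_state K u & sat V u X c.

Definition max_set K :=
  good_set K /\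
  forall L, (forall u, info_state K u -> info_holds L u) ->
    (exists2 u, X u & ~ info_holds K u /\ info_holds L u) -> ~ good_set L.

Definition theta_state Y := forall v, Y v -> nf_holds V X phi psi D Y v.

Definition active_set Y : {set I} := [set i | `[< box_dias_hold V X (psi i) (D i) Y >]].

Lemma theta_state_info K : good_set K -> theta_state (info_state K).
Proof.
move=> goodK v [_ [[k Kk phik] psiK]]; exists k => //.
by split=> [u [_ [_ /(_ k Kk)]] // | c]; apply: goodK.
Qed.

Lemma info_active Y : theta_state Y -> forall v, Y v -> info_holds (active_set Y) v.
Proof.
move=> thY v Yv; split=> [|k]; last by rewrite inE => /asboolP[/(_ v Yv)].
by have [i phii psiDi] := thY v Yv; exists i => //; rewrite inE; apply/asboolP.
Qed.

Lemma good_active Y :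
  (forall v, Y v -> X v) -> theta_state Y -> good_set (active_set Y).
Proof.
move=> YX thY k; rewrite inE => /asboolP[_ Dk] c /Dk[u Yu cu].
by exists u => //; split; [exact: YX | exact: info_active].
Qed.

Lemma maximal_theta_state Y : maximal_substate theta_state X Y ->
  (forall u, Y u <-> info_state (active_set Y) u) /\ max_set (active_set Y).
Proof.
case=> YX thY Ymax; set K := active_set Y.
have goodK : good_set K := good_active YX thY.
have YK u : Y u -> info_state K u by move=> Yu; split; [exact: YX | exact: info_active].
have info_state_in_Y L : good_set L -> (forall u, Y u -> info_holds L u) ->
    forall u, info_state L u -> Y u.
  move=> goodL YL u Lu; apply: contrapT => nYu; apply: Ymax.
  exists (info_state L); split; [by move=> ? [] | exact: theta_state_info | | by exists u].
  by move=> z Yz; split; [exact: YX | exact: YL].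
split=> [u | ]; first by split; [exact: YK | apply: info_state_in_Y => // z /YK[]].
split=> // L KL [u Xu [nKu Lu]] goodL; apply: nKu.
have YL z : Y z -> info_holds L z by move/YK/KL.
by case: (YK u (info_state_in_Y L goodL YL u (conj Xu Lu))).
Qed.

Lemma max_set_maximal K : max_set K -> maximal_substate theta_state X (info_state K).
Proof.
case=> goodK Kmax; split; [by move=> ? [] | exact: theta_state_info |].
move=> [Z [ZX thZ KZ [u Zu nKu]]].
have info_Z := info_active thZ.
apply: (Kmax (active_set Z)); [by move=> z /KZ /info_Z | | exact: good_active].
exists u; first exact: ZX.
by split; [move=> Ku; apply: nKu; split=> //; exact: ZX | exact: info_Z].
Qed.

End Maximal_theta_states.

Section Translation.
Variables (W : Type) (V : nat -> W -> Prop) (X : W -> Prop).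
Variables (I J : finType) (phi psi : I -> form) (D : I -> seq form).
Variables (alpha beta : J -> form) (E : J -> seq form).
Hypotheses (Hphi : forall i, nonmodal (phi i)) (Hpsi : forall i, nonmodal (psi i)).
Implicit Types (u v : W) (Y : W -> Prop) (K L : {set I}) (Sj : {set J}).

Lemma sat_info K v Y : sat V v Y (info phi psi K) <-> info_holds V X phi psi K v.
Proof.
rewrite /info /= sat_BigOr_map sat_BigAnd_map.
split=> [[[k /In_enum Kk phik] psiK] | [[k Kk phik] psiK]]; split.
- by exists k => //; apply/(sat_nonmodal _ _ Y _ (Hphi k)).
- by move=> k' /In_enum /psiK /(sat_nonmodal _ _ _ X (Hpsi k')).
- by exists k; [apply/In_enum | apply/(sat_nonmodal _ _ _ X (Hphi k))].
- by move=> k' /In_enum /psiK /(sat_nonmodal _ _ Y _ (Hpsi k')).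
Qed.

Lemma sat_good K v : sat V v X (good phi psi D K) <-> good_set V X phi psi D K.
Proof.
rewrite sat_BigAnd_flatten; split=> [H k Kk c Dc | H k /In_enum Kk].
- have /sat_BigAnd_map/(_ c Dc)/sat_Dia[u Xu [/sat_info Ku cu]] :=
    H k (proj2 (In_enum _ _) Kk).
  by exists u.
- apply/sat_BigAnd_map => c Dc; apply/sat_Dia.
  by have [u [Xu Ku] cu] := H k Kk c Dc; exists u => //; split=> //; apply/sat_info.
Qed.

Lemma sat_maxK K v : sat V v X (maxK phi psi D K) <-> max_set V X phi psi D K.
Proof.
rewrite [sat _ _ _ _]/= sat_good sat_BigAnd_map; apply: and_iff_compat_l.
split=> [H L KL [u Xu [nKu Lu]] /(sat_good L v) gL | H L _].
- have /sat_Imp nL := H L (In_enumT L); apply: (nL^~ gL); apply/sat_strict_entailment.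
  split=> [z Xz /sat_info Kz | ]; first by apply/sat_info; apply: KL.
  by exists u => //; split; [move/sat_info | apply/sat_info].
- apply/sat_Imp => /sat_strict_entailment[KL [u Xu [nKu Lu]]] /(sat_good L v).
  apply: H => [z [Xz Kz] | ]; first by apply/sat_info/KL => //; apply/(sat_info _ _ X).
  by exists u => //; split=> [/(sat_info _ _ X) // | ]; apply/(sat_info _ _ X).
Qed.

Lemma sat_info_box_dias K b C v :
  sat V v X (And (Box (Imp (info phi psi K) b))
                 (BigAnd [seq Dia (And (info phi psi K) g) | g <- C])) <->
  box_dias_hold V X b C (info_state V X phi psi K).
Proof.
rewrite sat_relative_box_dias; split=> -[Kb KC]; split.
- by move=> u [Xu /(sat_info _ _ X) Ku]; apply: Kb.
- by move=> c /KC[u Xu [/sat_info Ku cu]]; exists u.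
- by move=> u Xu /sat_info Ku; apply: Kb.
- by move=> c /KC[u [Xu Ku] cu]; exists u => //; split=> //; apply/sat_info.
Qed.

Lemma sat_state Sj v : sat V v X (state alpha Sj) <->
  (forall s, s \in Sj -> sat V v X (alpha s)) /\
  (forall s, s \in ~: Sj -> ~ sat V v X (alpha s)).
Proof.
rewrite [sat _ _ _ _]/= !sat_BigAnd_map.
by split=> -[SA SnA]; split=> s sS; [apply: SA | apply: SnA | apply: SA | apply: SnA];
  apply/In_enum.
Qed.

Lemma sat_state_cases K v :
  sat V v X (BigAnd [seq Imp (state alpha Sj)
     (BigOr [seq And (Box (Imp (info phi psi K) (beta s)))
                     (BigAnd [seq Dia (And (info phi psi K) g) | g <- E s]) | s <- enum Sj])
     | Sj <- enum {set J}]) <->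
  nf_holds V X alpha beta E (info_state V X phi psi K) v.
Proof.
rewrite sat_BigAnd_map /nf_holds -exists_in_truth_set.
split=> H Sj; [move=> SA SnA | move=> _; apply/sat_Imp => /sat_state[SA SnA]].
- have /sat_Imp/(_ (proj2 (sat_state Sj v) (conj SA SnA))) := H Sj (In_enumT Sj).
  by case/sat_BigOr_map => s /In_enum Ss /sat_info_box_dias; exists s.
- have [s Ss /sat_info_box_dias Ks] := H Sj SA SnA.
  by apply/sat_BigOr_map; exists s => //; apply/In_enum.
Qed.

Lemma sat_lambda_star v : sat V v X (lambda_star phi psi D alpha beta E) <->
  forall K, max_set V X phi psi D K ->
  forall u, info_state V X phi psi K u ->
    nf_holds V X alpha beta E (info_state V X phi psi K) u.
Proof.
rewrite sat_BigAnd_map; split=> [H K maxK u [Xu Ku] | H K _].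
- have /sat_Imp/(_ (proj2 (sat_maxK K v) maxK))/sat_Box_Imp/(_ u Xu) := H K (In_enumT K).
  by move/(_ (proj2 (sat_info K u X) Ku))/sat_state_cases.
- apply/sat_Imp => /sat_maxK maxK; apply/sat_Box_Imp => u Xu /sat_info Ku.
  by apply/sat_state_cases; apply: H.
Qed.

Hypotheses (HD : forall i, Forall nonmodal (D i)) (HE : forall j, Forall nonmodal (E j)).
Hypotheses (Halpha : forall j, nonmodal (alpha j)) (Hbeta : forall j, nonmodal (beta j)).

Lemma sat_lambda v : sat V v X (lambda phi psi D alpha beta E) <->
  forall Y, maximal_substate (theta_state V X phi psi D) X Y ->
  forall u, Y u -> nf_holds V X alpha beta E Y u.
Proof.
have thetaE Y u := sat_nf V X Y u Hphi Hpsi HD.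
have omegaE Y u := sat_nf V X Y u Halpha Hbeta HE.
have theta_sat Y : theta_state V X phi psi D Y <->
    forall u, Y u -> sat V u Y (Theta phi psi D).
  by split=> thY u /thY /thetaE.
rewrite /lambda (sat_Cond v X _ theta_sat).
by split=> H Y maxY u Yu; apply/omegaE; apply: H.
Qed.

End Translation.

Theorem proposition14 (I J : finType)
  (phi psi : I -> form) (D : I -> seq form)
  (alpha beta : J -> form) (E : J -> seq form)
  (Hphi : forall i, nonmodal (phi i)) (Hpsi : forall i, nonmodal (psi i))
  (HD : forall i, Forall nonmodal (D i))
  (Halpha : forall j, nonmodal (alpha j)) (Hbeta : forall j, nonmodal (beta j))
  (HE : forall j, Forall nonmodal (E j))
  (W : Type) (V : nat -> W -> Prop) (w : W) (X : W -> Prop) :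
  sat V w X (lambda phi psi D alpha beta E) <->
  sat V w X (lambda_star phi psi D alpha beta E).
Proof.
rewrite sat_lambda // sat_lambda_star //.
split=> [lam K maxK u Ku | star Y maxY u Yu].
- exact: lam (max_set_maximal maxK) u Ku.
- have [YK maxK] := maximal_theta_state maxY.
  apply: nf_holds_ext (star _ maxK u (proj1 (YK u) Yu)) => z.
  exact: iff_sym (YK z).
Qed.
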